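(* Let $h>0$, $n\in\mathbb{N}$, and let $\lambda:\mathbb{T}\to\mathbb{R}$ be an $n$-cycle with values $\lambda_0,\dots,\lambda_{n-1}\in\mathbb{R}\setminus\{\pm\tfrac1h\}$, such that $0<|e_{\lambda}(nh)|\neq1$ and $0<|e_{-\lambda}(nh)|\neq1$. Then the discrete Hill-type equation $$\Delta_h^2 y(t)+\bigl[\Delta_h\lambda(t)-\lambda(t)\lambda(t+h)\bigr]y(t)=0,\qquad t\in\mathbb{T},$$ has Hyers–Ulam stability on $\mathbb{T}$ with Hyers–Ulam stability constant $K=K_0(\lambda)K_0(-\lambda)$.
   Context: Fix $h>0$ and let $\mathbb{T}=\{0,h,2h,3h,\dots\}$. For $x:\mathbb{T}\to\mathbb{R}$, $\Delta_h x(t)=\frac{x(t+h)-x(t)}{h}$ and $\Delta_h^2x=\Delta_h(\Delta_h x)$, $\Delta_h^3x=\Delta_h(\Delta_h^2 x)$. An $n$-cycle is a function $\mu:\mathbb{T}\to\mathbb{R}$ with $\mu(t)=\mu_k$ whenever $t/h\equiv k\pmod n$, $k\in\{0,\dots,n-1\}$, which has period $n$ and no smaller period. For such $\mu$ define the discrete exponential $e_\mu(t)=\prod_{k=0}^{t/h-1}(1+h\mu(kh))$ (empty product $=1$), so $e_\mu(nh)=\prod_{k=0}^{n-1}(1+h\mu_k)$. For $k\in\{0,\dots,n-1\}$ define $$S_k(\mu)=\sum_{j=1}^{n}\prod_{i=0}^{j-1}\frac{1}{|1+h\mu_{(k+i)\bmod n}|},$$ (e.g. $S_0(\mu)=\frac{1}{|1+h\mu_0|}+\frac{1}{|1+h\mu_0||1+h\mu_1|}+\dots+\frac{1}{|1+h\mu_0|\cdots|1+h\mu_{n-1}|}$),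 and, when $0<|e_\mu(nh)|\neq1$, $$K_0(\mu)=\frac{h|e_\mu(nh)|}{\bigl|1-|e_\mu(nh)|\bigr|}\max\{S_0(\mu),\dots,S_{n-1}(\mu)\}.$$ Here $-\lambda$ denotes the $n$-cycle with values $-\lambda_0,\dots,-\lambda_{n-1}$. Hyers–Ulam stability: an equation $\mathcal{L}[y](t)=f(t)$, $t\in\mathbb{T}$ (with $\mathcal{L}$ a linear difference operator) has Hyers–Ulam stability on $\mathbb{T}$ with Hyers–Ulam stability constant $K>0$ if for every $\varepsilon>0$ and every $\xi:\mathbb{T}\to\mathbb{R}$ with $|\mathcal{L}[\xi](t)-f(t)|\le\varepsilon$ for all $t\in\mathbb{T}$, there is a solution $y:\mathbb{T}\to\mathbb{R}$ of the equation with $|\xi(t)-y(t)|\le K\varepsilon$ for all $t\in\mathbb{T}$. The minimum Hyers–Ulam stability constant is the smallest such $K$. *)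

From Stdlib Require Import Reals Lra Lia Arith.
Open Scope R_scope.

(* A function x : T -> R on T = {0,h,2h,...} is encoded as x : nat -> R,
   with x k standing for x(k h). *)

Fixpoint prodR (f : nat -> R) (m : nat) : R :=
  match m with O => 1 | S m' => prodR f m' * f m' end.

Fixpoint sumR (f : nat -> R) (m : nat) : R :=
  match m with O => 0 | S m' => sumR f m' + f m' end.

Fixpoint maxR (f : nat -> R) (m : nat) : R :=
  match m with O => f O | S m' => Rmax (maxR f m') (f (S m')) end.

Definition Dh (h : R) (x : nat -> R) : nat -> R :=
  fun k => (x (S k) - x k) / h.

Definition is_ncycle (n : nat) (mu : nat -> R) : Prop :=
  (0 < n)%nat /\
  (forall k, mu (k + n)%nat = mu k) /\
  (forall m, (0 < m < n)%nat -> ~ (forall k, mu (k + m)%nat = mu k)).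

Definition e_exp (h : R) (mu : nat -> R) (m : nat) : R :=
  prodR (fun k => 1 + h * mu k) m.

Definition S_k (h : R) (n : nat) (mu : nat -> R) (k : nat) : R :=
  sumR (fun j => prodR (fun i => / Rabs (1 + h * mu ((k + i) mod n)%nat)) (S j)) n.

Definition K0 (h : R) (n : nat) (mu : nat -> R) : R :=
  h * Rabs (e_exp h mu n) / Rabs (1 - Rabs (e_exp h mu n))
  * maxR (S_k h n mu) (n - 1)%nat.

Definition negf (mu : nat -> R) : nat -> R := fun k => - mu k.

Definition HU_stable (L : (nat -> R) -> nat -> R) (f : nat -> R) (K : R) : Prop :=
  0 < K /\
  forall eps : R, 0 < eps ->
  forall xi : nat -> R, (forall k, Rabs (L xi k - f k) <= eps) ->
  exists y : nat -> R, (forall k, L y k = f k) /\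
                       (forall k, Rabs (xi k - y k) <= K * eps).

Definition hillL (h : R) (lam : nat -> R) (y : nat -> R) : nat -> R :=
  fun k => Dh h (Dh h y) k + (Dh h lam k - lam k * lam (S k)) * y k.

(* The operator factors into two first-order operators:
   if  Δv = λ(t+h) v + g  and  Δu = -λ(t) u + v,  then  Δ²u + [Δλ - λλ(t+h)] u = g.
   So everything reduces to the first-order equation
     u(k+1) = a_k u(k) + f(k)                                     (⋆)
   with an n-periodic nonvanishing coefficient a and monodromy P = |a_0⋯a_{n-1}| ≠ 1.
   For such equations we build, for every bounded f (|f| ≤ d), a solution with
     |u(k)| ≤ P G_k / |1 - P| · d,   G_k = Σ_{j<n} Π_{i≤j} 1/|a_{k+i}|,
   by forward recursion from u(0) = 0 when P < 1, and by the convergent backward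
   series u(k) = -Σ_m f(k+m) Π_{i≤m} 1/a_{k+i} when P > 1.  In both cases the
   bound follows from the one-step identity |a_k| G_k = 1 + G_{k+1} - 1/P.
   With a = 1 + hμ and f = h g this is exactly the constant K_0(μ) of the paper.
   The main theorem applies this twice (to λ(·+h) and to -λ) and corrects the
   approximate solution ξ by the particular solution u of Hill[u] = Hill[ξ]. *)

From Stdlib Require Import Reals Lra Lia Arith.
From Coquelicot Require Import Coquelicot.
Open Scope R_scope.

Lemma prodR_ext (f g : nat -> R) (m : nat) :
  (forall i, (i < m)%nat -> f i = g i) -> prodR f m = prodR g m.
Proof.
  induction m as [|m IH]; intros Hfg; simpl; [reflexivity|].
  rewrite IH by (intros; apply Hfg; lia); rewrite Hfg by lia; reflexivity.
Qed.

Lemma sumR_ext (f g : nat -> R) (m : nat) :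
  (forall i, (i < m)%nat -> f i = g i) -> sumR f m = sumR g m.
Proof.
  induction m as [|m IH]; intros Hfg; simpl; [reflexivity|].
  rewrite IH by (intros; apply Hfg; lia); rewrite Hfg by lia; reflexivity.
Qed.

Lemma prodR_front (f : nat -> R) (m : nat) :
  prodR f (S m) = f O * prodR (fun i => f (S i)) m.
Proof. induction m as [|m IH]; simpl in *; [ring|]. rewrite IH; ring. Qed.

Lemma sumR_front (f : nat -> R) (m : nat) :
  sumR f (S m) = f O + sumR (fun i => f (S i)) m.
Proof. induction m as [|m IH]; simpl in *; [ring|]. rewrite IH; ring. Qed.

Lemma prodR_shift_front (f : nat -> R) (k m : nat) :
  prodR (fun i => f (k + i)%nat) (S m) = f k * prodR (fun i => f (S k + i)%nat) m.
Proof.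
  rewrite prodR_front, Nat.add_0_r; f_equal.
  apply prodR_ext; intros i _; f_equal; lia.
Qed.

Lemma sumR_scal (c : R) (f : nat -> R) (m : nat) :
  sumR (fun j => c * f j) m = c * sumR f m.
Proof. induction m as [|m IH]; simpl; [ring|]. rewrite IH; ring. Qed.

Lemma prodR_pos (f : nat -> R) (m : nat) : (forall i, 0 < f i) -> 0 < prodR f m.
Proof.
  intros Hf; induction m as [|m IH]; simpl; [lra|].
  apply Rmult_lt_0_compat; auto.
Qed.

Lemma prodR_nz (f : nat -> R) (m : nat) : (forall i, f i <> 0) -> prodR f m <> 0.
Proof.
  intros Hf; induction m as [|m IH]; simpl; [lra|].
  apply Rmult_integral_contrapositive; auto.
Qed.

Lemma sumR_pos (f : nat -> R) (m : nat) :
  (0 < m)%nat -> (forall i, 0 < f i) -> 0 < sumR f m.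
Proof.
  intros Hm Hf; induction m as [|m IH]; [lia|]; simpl.
  destruct m as [|m]; simpl in *.
  - specialize (Hf O); lra.
  - assert (0 < sumR f m + f m) by (apply IH; lia).
    specialize (Hf (S m)); lra.
Qed.

Lemma prodR_Rabs (f : nat -> R) (m : nat) :
  Rabs (prodR f m) = prodR (fun i => Rabs (f i)) m.
Proof.
  induction m as [|m IH]; simpl; [apply Rabs_R1|].
  rewrite Rabs_mult, IH; reflexivity.
Qed.

Lemma prodR_inv (f : nat -> R) (m : nat) :
  (forall i, f i <> 0) -> / prodR f m = prodR (fun i => / f i) m.
Proof.
  intros Hf; induction m as [|m IH]; simpl; [apply Rinv_1|].
  rewrite Rinv_mult, IH; reflexivity.
Qed.

Lemma maxR_ge (f : nat -> R) (m j : nat) : (j <= m)%nat -> f j <= maxR f m.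
Proof.
  induction m as [|m IH]; intros Hj; simpl.
  - replace j with O by lia; lra.
  - destruct (Nat.eq_dec j (S m)) as [->|Hne]; [apply Rmax_r|].
    eapply Rle_trans; [apply IH; lia | apply Rmax_l].
Qed.

Lemma sum_n_sumR (f : nat -> R) (N : nat) : sum_n f N = sumR f (S N).
Proof.
  induction N as [|N IH].
  - rewrite sum_O; simpl; ring.
  - rewrite sum_Sn, IH; reflexivity.
Qed.

Lemma series_dominated (c b : nat -> R) (B : R) :
  (forall m, Rabs (c m) <= b m) -> (forall N, sumR b N <= B) ->
  ex_series c /\ Rabs (Series c) <= B.
Proof.
  intros Hcb HbB.
  assert (b_nonneg : forall m, 0 <= b m)
    by (intro m; eapply Rle_trans; [apply Rabs_pos | apply Hcb]).
  assert (partial_le : forall N, sum_n b N <= B)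
    by (intro N; rewrite sum_n_sumR; apply HbB).
  destruct (ex_finite_lim_seq_incr (sum_n b) B) as [l Hl]; [|exact partial_le|].
  { intro N; rewrite sum_Sn; specialize (b_nonneg (S N)); simpl; unfold plus; simpl; lra. }
  assert (b_sum : is_series b l) by exact Hl.
  assert (b_ex : ex_series b) by (exists l; exact b_sum).
  assert (l_le : l <= B)
    by exact (is_lim_seq_le _ _ l B partial_le Hl (is_lim_seq_const B)).
  assert (abs_ex : ex_series (fun m => Rabs (c m))).
  { apply (@ex_series_le R_AbsRing R_CompleteNormedModule) with b; [|exact b_ex].
    intro m; change norm with Rabs; simpl; rewrite Rabs_Rabsolu; apply Hcb. }
  split.
  - apply (@ex_series_le R_AbsRing R_CompleteNormedModule) with b; [|exact b_ex].
    intro m; apply Hcb.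
  - eapply Rle_trans; [apply Series_Rabs, abs_ex|].
    eapply Rle_trans; [apply Series_le; [|exact b_ex]|].
    + intro m; split; [apply Rabs_pos | apply Hcb].
    + rewrite (is_series_unique _ _ b_sum); exact l_le.
Qed.

Section PeriodicProducts.
Variables (n : nat) (f : nat -> R).
Hypothesis n_pos : (0 < n)%nat.
Hypothesis f_periodic : forall k, f (k + n)%nat = f k.

Lemma periodic_mod (k : nat) : f (k mod n) = f k.
Proof.
  rewrite (Nat.div_mod_eq k n) at 2.
  induction (k / n)%nat as [|q IH]; [rewrite Nat.mul_0_r; reflexivity|].
  replace (n * S q + k mod n)%nat with ((n * q + k mod n) + n)%nat by lia.
  rewrite f_periodic; exact IH.
Qed.

Lemma prodR_periodic_shift (s : nat) :
  (forall k, f k <> 0) -> prodR (fun i => f (s + i)%nat) n = prodR f n.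
Proof.
  intros f_nz; induction s as [|s IH]; [reflexivity|].
  rewrite <- IH.
  assert (E : prodR (fun i => f (s + i)%nat) (S n)
              = f s * prodR (fun i => f (S s + i)%nat) n) by apply prodR_shift_front.
  simpl prodR at 1 in E; rewrite f_periodic in E.
  apply Rmult_eq_reg_l with (f s); [rewrite <- E; ring | apply f_nz].
Qed.
End PeriodicProducts.

Definition monodromy (a : nat -> R) (n : nat) : R := Rabs (prodR a n).

Definition green_sum (a : nat -> R) (n k : nat) : R :=
  sumR (fun j => prodR (fun i => / Rabs (a (k + i)%nat)) (S j)) n.

Definition green_bound (a : nat -> R) (n k : nat) : R :=
  monodromy a n * green_sum a n k / Rabs (1 - monodromy a n).

Definition backward_weight (a : nat -> R) (k m : nat) : R :=
  prodR (fun i => / Rabs (a (k + i)%nat)) (S m).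

Definition backward_term (a f : nat -> R) (k m : nat) : R :=
  f (k + m)%nat * prodR (fun i => / a (k + i)%nat) (S m).

Section FirstOrder.
Variables (n : nat) (a : nat -> R).
Hypothesis n_pos : (0 < n)%nat.
Hypothesis a_periodic : forall k, a (k + n)%nat = a k.
Hypothesis a_nz : forall k, a k <> 0.

Lemma abs_a_pos (k : nat) : 0 < Rabs (a k).
Proof. apply Rabs_pos_lt, a_nz. Qed.

Lemma monodromy_pos : 0 < monodromy a n.
Proof. apply Rabs_pos_lt, prodR_nz, a_nz. Qed.

Lemma prodR_inv_period (s : nat) :
  prodR (fun i => / Rabs (a (s + i)%nat)) n = / monodromy a n.
Proof.
  rewrite (prodR_periodic_shift n (fun i => / Rabs (a i))); auto.
  - unfold monodromy; rewrite prodR_Rabs, prodR_inv; [reflexivity|].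
    intro i; apply Rgt_not_eq, abs_a_pos.
  - intro k; simpl; rewrite a_periodic; reflexivity.
  - intro k; apply Rinv_neq_0_compat, Rgt_not_eq, abs_a_pos.
Qed.

Lemma green_sum_pos (k : nat) : 0 < green_sum a n k.
Proof.
  apply sumR_pos; [exact n_pos|]; intro j.
  apply prodR_pos; intro i; apply Rinv_0_lt_compat, abs_a_pos.
Qed.

Lemma green_sum_step (k : nat) :
  Rabs (a k) * green_sum a n k = 1 + green_sum a n (S k) - / monodromy a n.
Proof.
  set (w := fun i => / Rabs (a i)).
  assert (peel : green_sum a n k
                 = w k * sumR (fun j => prodR (fun i => w (S k + i)%nat) j) n).
  { unfold green_sum; rewrite <- sumR_scal; apply sumR_ext; intros j _.
    apply (prodR_shift_front w). }
  assert (extend : sumR (fun j => prodR (fun i => w (S k + i)%nat) j) (S n)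
                   = sumR (fun j => prodR (fun i => w (S k + i)%nat) j) n + / monodromy a n)
    by (rewrite <- (prodR_inv_period (S k)); reflexivity).
  rewrite sumR_front in extend; simpl prodR at 1 in extend.
  rewrite peel; unfold w at 1; rewrite <- Rmult_assoc, Rinv_r, Rmult_1_l
    by apply Rgt_not_eq, abs_a_pos.
  unfold green_sum, w in *; cbv beta in *; lra.
Qed.

Lemma green_bound_pos (k : nat) : monodromy a n <> 1 -> 0 < green_bound a n k.
Proof.
  intros P_ne1; pose proof monodromy_pos; pose proof (green_sum_pos k).
  unfold green_bound, Rdiv.
  apply Rmult_lt_0_compat; [nra|].
  apply Rinv_0_lt_compat, Rabs_pos_lt; lra.
Qed.

Lemma green_bound_forward (k : nat) : monodromy a n < 1 ->
  green_bound a n (S k) = Rabs (a k) * green_bound a n k + 1.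
Proof.
  intros P_lt1; pose proof monodromy_pos; pose proof (green_sum_step k).
  unfold green_bound; rewrite Rabs_right by lra.
  replace (green_sum a n (S k))
    with (Rabs (a k) * green_sum a n k - 1 + / monodromy a n) by lra.
  field; lra.
Qed.

Lemma green_bound_backward (k : nat) : 1 < monodromy a n ->
  green_bound a n k = / Rabs (a k) * (1 + green_bound a n (S k)).
Proof.
  intros P_gt1; pose proof (abs_a_pos k); pose proof (green_sum_step k).
  unfold green_bound; rewrite Rabs_left by lra.
  replace (green_sum a n (S k))
    with (Rabs (a k) * green_sum a n k - 1 + / monodromy a n) by lra.
  field; lra.
Qed.

Lemma forward_solution (f : nat -> R) (d : R) : monodromy a n < 1 ->
  (forall k, Rabs (f k) <= d) ->
  exists u, (forall k, u (S k) = a k * u k + f k) /\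
            (forall k, Rabs (u k) <= green_bound a n k * d).
Proof.
  intros P_lt1 f_le.
  assert (d_nonneg : 0 <= d) by (eapply Rle_trans; [apply Rabs_pos | apply (f_le O)]).
  set (u := fix u k := match k with O => 0 | S k' => a k' * u k' + f k' end).
  exists u; split; [reflexivity|].
  induction k as [|k IH].
  - simpl; rewrite Rabs_R0.
    apply Rmult_le_pos; [left; apply green_bound_pos; lra | exact d_nonneg].
  - change (u (S k)) with (a k * u k + f k).
    rewrite green_bound_forward by exact P_lt1.
    eapply Rle_trans; [apply Rabs_triang|]; rewrite Rabs_mult.
    pose proof (Rabs_pos (a k)); pose proof (f_le k).
    assert (Rabs (a k) * Rabs (u k) <= Rabs (a k) * (green_bound a n k * d))
      by (apply Rmult_le_compat_l; assumption).
    nra.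
Qed.

Lemma backward_weight_step (k m : nat) :
  backward_weight a k (S m) = / Rabs (a k) * backward_weight a (S k) m.
Proof. apply (prodR_shift_front (fun i => / Rabs (a i))). Qed.

Lemma backward_weight_sum (N k : nat) : 1 < monodromy a n ->
  sumR (backward_weight a k) N <= green_bound a n k.
Proof.
  intros P_gt1; revert k; induction N as [|N IH]; intro k.
  - left; apply green_bound_pos; simpl; lra.
  - rewrite sumR_front, green_bound_backward by exact P_gt1.
    rewrite (sumR_ext _ (fun m => / Rabs (a k) * backward_weight a (S k) m))
      by (intros; apply backward_weight_step).
    rewrite sumR_scal.
    replace (backward_weight a k 0) with (/ Rabs (a k))
      by (unfold backward_weight; simpl; rewrite Nat.add_0_r; ring).
    pose proof (Rinv_0_lt_compat _ (abs_a_pos k)); specialize (IH (S k)); nra.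
Qed.

Lemma backward_term_step (f : nat -> R) (k m : nat) :
  backward_term a f k (S m) = / a k * backward_term a f (S k) m.
Proof.
  unfold backward_term; rewrite (prodR_shift_front (fun i => / a i)).
  replace (k + S m)%nat with (S k + m)%nat by lia; ring.
Qed.

Lemma backward_term_bound (f : nat -> R) (d : R) (k m : nat) :
  (forall k, Rabs (f k) <= d) ->
  Rabs (backward_term a f k m) <= d * backward_weight a k m.
Proof.
  intros f_le; unfold backward_term, backward_weight.
  rewrite Rabs_mult, prodR_Rabs.
  rewrite (prodR_ext _ (fun i => / Rabs (a (k + i)%nat))) by (intros; apply Rabs_inv).
  apply Rmult_le_compat_r; [|apply f_le].
  left; apply prodR_pos; intro i; apply Rinv_0_lt_compat, abs_a_pos.
Qed.

Lemma backward_solution (f : nat -> R) (d : R) : 1 < monodromy a n ->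
  (forall k, Rabs (f k) <= d) ->
  exists u, (forall k, u (S k) = a k * u k + f k) /\
            (forall k, Rabs (u k) <= green_bound a n k * d).
Proof.
  intros P_gt1 f_le.
  assert (converges : forall k, ex_series (backward_term a f k) /\
            Rabs (Series (backward_term a f k)) <= green_bound a n k * d).
  { intro k; apply series_dominated with (fun m => d * backward_weight a k m).
    - intro m; apply backward_term_bound, f_le.
    - intro N; rewrite sumR_scal, Rmult_comm.
      assert (0 <= d) by (eapply Rle_trans; [apply Rabs_pos | apply (f_le O)]).
      apply Rmult_le_compat_r; [assumption | apply backward_weight_sum, P_gt1]. }
  exists (fun k => - Series (backward_term a f k)); split.
  - intro k; destruct (converges k) as [ex_k _].
    rewrite (Series_incr_1 (backward_term a f k) ex_k).
    rewrite (Series_ext (fun m => backward_term a f k (S m))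
                        (fun m => / a k * backward_term a f (S k) m))
      by (intro; apply backward_term_step).
    rewrite Series_scal_l.
    replace (backward_term a f k 0) with (f k * / a k)
      by (unfold backward_term; simpl; rewrite Nat.add_0_r; ring).
    field; apply a_nz.
  - intro k; rewrite Rabs_Ropp; apply converges.
Qed.

Lemma first_order_solution (f : nat -> R) (d : R) : monodromy a n <> 1 ->
  (forall k, Rabs (f k) <= d) ->
  exists u, (forall k, u (S k) = a k * u k + f k) /\
            (forall k, Rabs (u k) <= green_bound a n k * d).
Proof.
  intros P_ne1 f_le.
  destruct (Rlt_dec (monodromy a n) 1).
  - apply forward_solution; assumption.
  - apply backward_solution; [lra | assumption].
Qed.

Lemma green_bound_shift (s k : nat) :
  green_bound (fun i => a (s + i)%nat) n k = green_bound a n (s + k).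
Proof.
  assert (P_shift : monodromy (fun i => a (s + i)%nat) n = monodromy a n)
    by (unfold monodromy; rewrite prodR_periodic_shift; auto).
  unfold green_bound; rewrite P_shift; do 2 f_equal.
  unfold green_sum; apply sumR_ext; intros j _; apply prodR_ext; intros i _.
  rewrite Nat.add_assoc; reflexivity.
Qed.

Lemma green_sum_mod (k : nat) : green_sum a n (k mod n) = green_sum a n k.
Proof.
  unfold green_sum; apply sumR_ext; intros j _; apply prodR_ext; intros i _.
  rewrite <- (periodic_mod n a n_pos a_periodic (k + i)).
  rewrite <- (periodic_mod n a n_pos a_periodic (k mod n + i)).
  rewrite Nat.Div0.add_mod_idemp_l; reflexivity.
Qed.
End FirstOrder.

Section DeltaEquation.
Variables (h : R) (n : nat) (mu : nat -> R).
Hypothesis h_pos : 0 < h.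
Hypothesis n_pos : (0 < n)%nat.
Hypothesis mu_periodic : forall k, mu (k + n)%nat = mu k.
Hypothesis mu_nz : forall k, 1 + h * mu k <> 0.
Hypothesis e_ne1 : Rabs (e_exp h mu n) <> 1.

Let a := fun i => 1 + h * mu i.

Lemma a_periodic (k : nat) : a (k + n)%nat = a k.
Proof. unfold a; rewrite mu_periodic; reflexivity. Qed.

Lemma S_k_green_sum (k : nat) : S_k h n mu k = green_sum a n k.
Proof.
  unfold S_k, green_sum; apply sumR_ext; intros j _; apply prodR_ext; intros i _.
  unfold a; rewrite (periodic_mod n mu n_pos mu_periodic); reflexivity.
Qed.

Lemma S_k_le_max (k : nat) : S_k h n mu k <= maxR (S_k h n mu) (n - 1).
Proof.
  rewrite S_k_green_sum, <- green_sum_mod, <- S_k_green_sum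
    by (exact n_pos || exact a_periodic).
  apply maxR_ge; pose proof (Nat.mod_upper_bound k n); lia.
Qed.

Lemma green_bound_le_K0 (k : nat) : h * green_bound a n k <= K0 h n mu.
Proof.
  unfold green_bound, K0; rewrite <- S_k_green_sum.
  change (monodromy a n) with (Rabs (e_exp h mu n)).
  set (P := Rabs (e_exp h mu n)) in *.
  assert (P_pos : 0 < P) by exact (monodromy_pos n a mu_nz).
  assert (0 < Rabs (1 - P)) by (apply Rabs_pos_lt; lra).
  replace (h * (P * S_k h n mu k / Rabs (1 - P)))
    with (h * P / Rabs (1 - P) * S_k h n mu k) by (field; lra).
  apply Rmult_le_compat_l; [|apply S_k_le_max].
  unfold Rdiv; apply Rmult_le_pos; [nra | left; apply Rinv_0_lt_compat; assumption].
Qed.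

Lemma K0_pos : 0 < K0 h n mu.
Proof.
  eapply Rlt_le_trans; [|apply (green_bound_le_K0 O)].
  apply Rmult_lt_0_compat; [exact h_pos|].
  apply green_bound_pos; [exact n_pos | exact mu_nz | exact e_ne1].
Qed.

Lemma first_order_HU (s : nat) (g : nat -> R) (d : R) :
  (forall k, Rabs (g k) <= d) ->
  exists u, (forall k, u (S k) = (1 + h * mu (s + k)%nat) * u k + h * g k) /\
            (forall k, Rabs (u k) <= K0 h n mu * d).
Proof.
  intros g_le.
  assert (d_nonneg : 0 <= d) by (eapply Rle_trans; [apply Rabs_pos | apply (g_le O)]).
  assert (P_shift : monodromy (fun i => a (s + i)%nat) n = monodromy a n)
    by (unfold monodromy; rewrite (prodR_periodic_shift n a a_periodic s mu_nz); reflexivity).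
  assert (shifted_periodic : forall k, a (s + (k + n))%nat = a (s + k)%nat)
    by (intro k; replace (s + (k + n))%nat with ((s + k) + n)%nat by lia; apply a_periodic).
  assert (f_le : forall k, Rabs (h * g k) <= h * d)
    by (intro k; rewrite Rabs_mult, Rabs_right by lra; apply Rmult_le_compat_l; [lra | apply g_le]).
  destruct (first_order_solution n (fun i => a (s + i)%nat) n_pos shifted_periodic
              (fun k => mu_nz (s + k)) (fun k => h * g k) (h * d))
    as [u [u_rec u_le]]; [rewrite P_shift; exact e_ne1 | exact f_le |].
  exists u; split; [exact u_rec|]; intro k.
  eapply Rle_trans; [apply u_le|].
  rewrite (green_bound_shift n a a_periodic mu_nz).
  pose proof (green_bound_le_K0 (s + k)).
  replace (green_bound a n (s + k) * (h * d)) with (h * green_bound a n (s + k) * d) by ring.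
  apply Rmult_le_compat_r; assumption.
Qed.
End DeltaEquation.

Lemma hill_factorization (h : R) (lam g u v : nat -> R) : h <> 0 ->
  (forall k, v (S k) = (1 + h * lam (S k)) * v k + h * g k) ->
  (forall k, u (S k) = (1 + h * negf lam k) * u k + h * v k) ->
  forall k, hillL h lam u k = g k.
Proof.
  intros h_nz v_rec u_rec k; unfold hillL, Dh.
  rewrite (u_rec (S k)), (u_rec k), (v_rec k); unfold negf.
  field; exact h_nz.
Qed.

Lemma hillL_sub (h : R) (lam x y : nat -> R) (k : nat) :
  hillL h lam (fun i => x i - y i) k = hillL h lam x k - hillL h lam y k.
Proof. unfold hillL, Dh; unfold Rdiv; ring. Qed.

Theorem theorem3p2 (h : R) (n : nat) (lam : nat -> R) :
  0 < h ->
  is_ncycle n lam ->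
  (forall k, lam k <> 1 / h /\ lam k <> - (1 / h)) ->
  0 < Rabs (e_exp h lam n) -> Rabs (e_exp h lam n) <> 1 ->
  0 < Rabs (e_exp h (negf lam) n) -> Rabs (e_exp h (negf lam) n) <> 1 ->
  HU_stable (hillL h lam) (fun _ => 0) (K0 h n lam * K0 h n (negf lam)).
Proof.
  intros h_pos [n_pos [lam_periodic _]] lam_regular _ e_ne1 _ e_neg_ne1.
  assert (lam_nz : forall k, 1 + h * lam k <> 0).
  { intros k E; apply (proj2 (lam_regular k)); field_simplify_eq; lra. }
  assert (neg_nz : forall k, 1 + h * negf lam k <> 0).
  { intros k E; apply (proj1 (lam_regular k)); unfold negf in E; field_simplify_eq; lra. }
  assert (neg_periodic : forall k, negf lam (k + n)%nat = negf lam k)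
    by (intro k; unfold negf; rewrite lam_periodic; reflexivity).
  split; [apply Rmult_lt_0_compat; apply K0_pos; assumption|].
  intros eps eps_pos xi xi_approx.
  (* Solve Hill[u] = Hill[ξ] = g by the factorization: first v, then u. *)
  set (g := hillL h lam xi).
  assert (g_le : forall k, Rabs (g k) <= eps)
    by (intro k; rewrite <- (Rminus_0_r (g k)); apply xi_approx).
  destruct (first_order_HU h n lam h_pos n_pos lam_periodic lam_nz e_ne1 1 g eps g_le)
    as [v [v_rec v_le]].
  destruct (first_order_HU h n (negf lam) h_pos n_pos neg_periodic neg_nz e_neg_ne1 0 v _ v_le)
    as [u [u_rec u_le]].
  exists (fun k => xi k - u k); split.
  - intro k; rewrite hillL_sub, (hill_factorization h lam g u v);
      [unfold g; ring | lra | exact v_rec | exact u_rec].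
  - intro k; replace (xi k - (xi k - u k)) with (u k) by ring.
    eapply Rle_trans; [apply u_le | right; ring].
Qed.
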